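(* Let $k$ be an infinite field, $d>0$, $a\geq 7$ integers with $\gcd(a,d)=1$, and $R=k[[t^a,t^{2a+d},t^{3a+3d},t^{4a+6d}]]$ with maximal ideal $\mathfrak{m}$. The Hilbert series of the tangent cone $G_{\mathfrak{m}}$, $\sum_{n\geq0}\dim_k(\mathfrak{m}^n/\mathfrak{m}^{n+1})x^n$, equals $$\frac{\sum_{k=0}^{\lfloor a/6\rfloor+2}t_kx^k}{1-x},\qquad t_k=\#\{i\mid 0\leq i\leq a-1,\ \mu_i+\nu_i+\xi_i=k\}.$$
   Context: For $1\leq i\leq a-1$ write $i=6\mu_i+q_i$ with $0\leq q_i<6$, set $(\nu_i,\xi_i)=(1,q_i-3)$ if $q_i\geq3$ and $(\nu_i,\xi_i)=(0,q_i)$ if $q_i<3$; set $(\mu_0,\nu_0,\xi_0)=(0,0,0)$. *)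

From mathcomp Require Import all_boot all_order all_algebra.
Set Implicit Arguments. Unset Strict Implicit. Unset Printing Implicit Defensive.
Import GRing.Theory.
Local Open Scope ring_scope.

Definition ps (k : fieldType) := nat -> k.

Definition ps_mul (k : fieldType) (f g : ps k) : ps k :=
  fun n => \sum_(i < n.+1) f i * g (n - i)%N.

Definition in_sg (a d s : nat) : Prop :=
  exists c0 c1 c2 c3 : nat,
    s = (c0 * a + c1 * (2 * a + d) + c2 * (3 * a + 3 * d) + c3 * (4 * a + 6 * d))%N.

(* R = k[[t^a, t^(2a+d), t^(3a+3d), t^(4a+6d)]] inside k[[t]]:
   the power series whose support lies in S. *)
Definition Rring (k : fieldType) (a d : nat) (f : ps k) : Prop :=
  forall n, f n != 0 -> in_sg a d n.

Definition mideal (k : fieldType) (a d : nat) (f : ps k) : Prop :=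
  Rring a d f /\ f 0%N = 0.

Fixpoint mpow (k : fieldType) (a d : nat) (n : nat) : ps k -> Prop :=
  match n with
  | 0 => Rring a d
  | n'.+1 => fun f => exists (r : nat) (x y : 'I_r -> ps k),
      (forall j, mideal a d (x j) /\ mpow a d n' (y j)) /\
      f = (fun m => \sum_(j < r) ps_mul (x j) (y j) m)
  end.

Definition lincomb (k : fieldType) (r : nat) (c : 'I_r -> k) (v : 'I_r -> ps k)
  : ps k := fun m => \sum_(i < r) c i * v i m.

(* dim_k (m^n / m^(n+1)) = r : there are r elements of m^n whose classes
   form a k-basis of the quotient m^n / m^(n+1). *)
Definition tangent_cone_dim (k : fieldType) (a d n r : nat) : Prop :=
  exists v : 'I_r -> ps k,
    (forall i, mpow a d n (v i)) /\
    (forall f, mpow a d n f -> exists c : 'I_r -> k,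
        mpow a d n.+1 (fun m => f m - lincomb c v m)) /\
    (forall c : 'I_r -> k, mpow a d n.+1 (lincomb c v) -> forall i, c i = 0).

Definition mu_i (i : nat) : nat := (i %/ 6)%N.
Definition nu_i (i : nat) : nat := if (3 <= i %% 6)%N then 1%N else 0%N.
Definition xi_i (i : nat) : nat :=
  if (3 <= i %% 6)%N then (i %% 6 - 3)%N else (i %% 6)%N.

Definition tcoef (a j : nat) : nat :=
  count (fun i => (mu_i i + nu_i i + xi_i i == j)%N) (iota 0 a).

(* Let S be the semigroup generated by g0..g3 = a, 2a+d, 3a+3d, 4a+6d and
   call s a member of nM when s is a sum of at least n generators.
   - Every power of the maximal ideal is a monomial ideal: m^n is exactly the
     set of series supported in nM ([mpowE]).  Hence the monomials t^s with s
     in the layer nM \ (n+1)M form a basis of m^n / m^(n+1)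
     ([tangent_cone_dim_layer]).
   - Writing s = aA + dj with j = c1 + 3c2 + 6c3, the greedy decomposition
     j = 6 mu_j + 3 nu_j + xi_j maximises the number of generators for fixed
     (A, j); together with gcd(a, d) = 1 and a >= 7 this shows that the layer
     consists of the pairwise distinct numbers
     a (n - o_i + w_i) + d i  for  0 <= i < a  with  o_i <= n,
     where o_i = mu_i + nu_i + xi_i and w_i = 4 mu_i + 3 nu_i + 2 xi_i
     ([layer_elt_in], [layer_elt_notin], [in_nM_layer], [layer_uniq]).
   - Since o_i <= a/6 + 2 for i < a, the number of such i is
     sum_(j <= min(n, a/6+2)) t_j ([size_layer]), the n-th coefficient of
     (sum_j t_j x^j) / (1 - x). *)

From mathcomp Require Import all_boot all_order all_algebra.
From mathcomp Require Import zify.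
From Stdlib Require Import ClassicalEpsilon FunctionalExtensionality.

Set Implicit Arguments. Unset Strict Implicit. Unset Printing Implicit Defensive.
Import GRing.Theory.

Lemma dvd_of_lin_eq a d U V t : coprime a d -> a * U = a * V + d * t -> a %| t.
Proof.
move=> cop E; rewrite -(Gauss_dvdr _ cop); apply/dvdnP; exists (U - V).
by rewrite mulnBl ![_ * a]mulnC E addnC addnK.
Qed.

Lemma coprime_lin_eq a d A X i j : coprime a d -> i < a ->
  a * A + d * i = a * X + d * j -> exists k, j = i + k * a /\ A = X + d * k.
Proof.
move=> cop ia E.
have [ij|ji] := leqP i j.
- have E2 : a * A = a * X + d * (j - i).
    by rewrite mulnBr; have := leq_mul (leqnn d) ij; lia.
  have /dvdnP [k jik] := dvd_of_lin_eq cop E2.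
  exists k; split; first lia.
  apply/eqP; rewrite -(@eqn_pmul2l a) ?E2 ?jik; lia.
- have E2 : a * X = a * A + d * (i - j).
    by rewrite mulnBr; have := leq_mul (leqnn d) (ltnW ji); lia.
  have /dvdnP [[|k] ijk] := dvd_of_lin_eq cop E2; lia.
Qed.

(* For the greedy decomposition i = 6 mu_i + 3 nu_i + xi_i, o_i is the number
   of parts and w_i = 2 xi_i + 3 nu_i + 4 mu_i the matching multiple of a
   (the generators 2a+d, 3a+3d, 4a+6d contribute 1, 3, 6 to the d-part). *)
Definition order_i (i : nat) : nat := mu_i i + nu_i i + xi_i i.
Definition weight_i (i : nat) : nat := 4 * mu_i i + 3 * nu_i i + 2 * xi_i i.

Lemma mu_nu_xi_spec i :
  i = 6 * mu_i i + 3 * nu_i i + xi_i i /\ nu_i i <= 1 /\ xi_i i < 3.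
Proof.
rewrite /mu_i /nu_i /xi_i; have := divn_eq i 6; have := ltn_pmod i (isT : 0 < 6).
by case: (leqP 3 (i %% 6)); lia.
Qed.

(* Optimality of the greedy decomposition among all j = c1 + 3 c2 + 6 c3:
   it minimises the weight 2c1 + 3c2 + 4c3 and the defect c1 + 2c2 + 3c3
   (weight minus number of parts). *)
Lemma greedy_min j c1 c2 c3 : j = c1 + 3 * c2 + 6 * c3 ->
  weight_i j <= order_i j + (c1 + 2 * c2 + 3 * c3) /\
  weight_i j <= 2 * c1 + 3 * c2 + 4 * c3.
Proof.
rewrite /order_i /weight_i; have := mu_nu_xi_spec j.
by move: (mu_i j) (nu_i j) (xi_i j); lia.
Qed.

Lemma weight_i_bounds i :
  2 * weight_i i <= 2 * order_i i + i + 3 /\ 3 * weight_i i <= 2 * i + 11.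
Proof.
rewrite /order_i /weight_i; have := mu_nu_xi_spec i.
by move: (mu_i i) (nu_i i) (xi_i i); lia.
Qed.

(* This bound is why the numerator of the Hilbert series stops at a/6 + 2. *)
Lemma order_i_le a i : i < a -> order_i i <= a %/ 6 + 2.
Proof.
rewrite /order_i; have := mu_nu_xi_spec i.
by move: (mu_i i) (nu_i i) (xi_i i); lia.
Qed.

Section Layers.
Variables a d : nat.

Definition in_nM (n s : nat) : Prop :=
  exists c0 c1 c2 c3 : nat,
    s = c0 * a + c1 * (2 * a + d) + c2 * (3 * a + 3 * d) + c3 * (4 * a + 6 * d)
    /\ n <= c0 + c1 + c2 + c3.

Lemma gen_combE c0 c1 c2 c3 :
  c0 * a + c1 * (2 * a + d) + c2 * (3 * a + 3 * d) + c3 * (4 * a + 6 * d) =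
  a * (c0 + 2 * c1 + 3 * c2 + 4 * c3) + d * (c1 + 3 * c2 + 6 * c3).
Proof. nia. Qed.

(* The greedy representation of a A + d j uses A - w_j + o_j generators. *)
Lemma in_nM_greedy n A j : weight_i j <= A -> n + weight_i j <= A + order_i j ->
  in_nM n (a * A + d * j).
Proof.
move=> wA nA; exists (A - weight_i j), (xi_i j), (nu_i j), (mu_i j).
rewrite gen_combE /order_i /weight_i in wA nA *; have [jE _] := mu_nu_xi_spec j.
move: (mu_i j) (nu_i j) (xi_i j) jE wA nA => z y x -> wA nA.
by split; [congr (a * _ + d * _) |]; lia.
Qed.

(* The element of the n-th layer congruent to d i modulo a. *)
Definition layer_elt (n i : nat) : nat := a * (n - order_i i + weight_i i) + d * i.

Lemma layer_elt_in n i : order_i i <= n -> in_nM n (layer_elt n i).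
Proof. by move=> oi; apply: in_nM_greedy; lia. Qed.

Definition layer (n : nat) : seq nat :=
  [seq layer_elt n i | i <- iota 0 a & order_i i <= n].

Lemma mem_layer n s :
  s \in layer n <-> exists i, [/\ i < a, order_i i <= n & s = layer_elt n i].
Proof.
split=> [/mapP [i] | [i [ia oi ->]]]; last by rewrite map_f // mem_filter mem_iota oi.
by rewrite mem_filter mem_iota => /andP [oi ia] ->; exists i.
Qed.

Hypothesis cop : coprime a d.

Lemma layer_uniq n : uniq (layer n).
Proof.
rewrite map_inj_in_uniq ?filter_uniq ?iota_uniq // => i j.
rewrite !mem_filter !mem_iota => /andP [_ ia] /andP [_ ja].
by move=> /(coprime_lin_eq cop ia) [[|k] [jE _]]; move: jE ja; rewrite ?mulSn; lia.
Qed.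

Hypothesis a_ge7 : 7 <= a.

(* Layer elements are not sums of n + 1 generators: another representation
   either has the same (A, j), where greedy is optimal, or has j >= i + a,
   which costs too much weight. *)
Lemma layer_elt_notin n i : i < a -> order_i i <= n -> ~ in_nM n.+1 (layer_elt n i).
Proof.
move=> ia oi [c0 [c1 [c2 [c3 []]]]]; rewrite gen_combE /layer_elt => E N.
have [k [jE AE]] := coprime_lin_eq cop ia E.
have [wo _] := greedy_min (erefl (c1 + 3 * c2 + 6 * c3)).
have [wi _] := weight_i_bounds i.
case: k jE AE => [|k] jE AE; first by move: wo AE; rewrite jE mul0n muln0 !addn0; lia.
by have := leq_pmull a (ltn0Sn k); lia.
Qed.

Lemma in_nM_layer n s : in_nM n s ->
  in_nM n.+1 s \/ exists i, [/\ i < a, order_i i <= n & s = layer_elt n i].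
Proof.
move=> [c0 [c1 [c2 [c3 [sE N]]]]].
have [N1|Nn] := leqP n.+1 (c0 + c1 + c2 + c3); first by left; exists c0, c1, c2, c3.
rewrite gen_combE in sE; set A := c0 + _ + _ + _ in sE; set j := c1 + _ + _ in sE.
have [wo wA] := greedy_min (erefl j).
have ia : j %% a < a by rewrite ltn_pmod //; lia.
have [wi wi'] := weight_i_bounds (j %% a).
have sE' : s = a * (A + d * (j %/ a)) + d * (j %% a).
  by rewrite sE {1}(divn_eq j a); nia.
case: (posnP (j %/ a)) => [k0|k_gt0].
- have jE : j = j %% a by rewrite {1}(divn_eq j a) k0.
  rewrite -jE k0 muln0 addn0 in ia wi wi' sE'.
  have [n1|n1] := leqP (n.+1 + weight_i j) (A + order_i j).
    by left; rewrite sE'; apply: in_nM_greedy; lia.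
  right; exists j; split=> //; first lia.
  by rewrite sE' /layer_elt; congr (a * _ + _); lia.
- left; rewrite sE'; apply: in_nM_greedy;
    by have := leq_pmull a k_gt0; have := divn_eq j a; lia.
Qed.

End Layers.

Lemma in_nM0 a d s : in_nM a d 0 s <-> in_sg a d s.
Proof.
split=> [[c0 [c1 [c2 [c3 [sE _]]]]] | [c0 [c1 [c2 [c3 sE]]]]];
  by exists c0, c1, c2, c3.
Qed.

Lemma in_nM1 a d s : 0 < a -> in_sg a d s -> s != 0 -> in_nM a d 1 s.
Proof.
move=> a_gt0 [c0 [c1 [c2 [c3 sE]]]] s_neq0; exists c0, c1, c2, c3; split=> //.
by move: s_neq0; rewrite sE; nia.
Qed.

Lemma in_nM_add a d n s t : in_nM a d 1 s -> in_nM a d n t -> in_nM a d n.+1 (s + t).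
Proof.
move=> [c0 [c1 [c2 [c3 [sE N]]]]] [e0 [e1 [e2 [e3 [tE M]]]]].
exists (c0 + e0), (c1 + e1), (c2 + e2), (c3 + e3); split; last lia.
by rewrite sE tE; nia.
Qed.

Definition gen (a d : nat) (j : 'I_4) : nat :=
  nth 0 [:: a; 2 * a + d; 3 * a + 3 * d; 4 * a + 6 * d] j.

Lemma gen_in_sg a d j : in_sg a d (gen a d j).
Proof.
rewrite /gen; case: j => [[|[|[|[|j]]]] //= _];
  [exists 1, 0, 0, 0 | exists 0, 1, 0, 0 | exists 0, 0, 1, 0 | exists 0, 0, 0, 1]; lia.
Qed.

Lemma gen_gt0 a d j : 0 < a -> 0 < gen a d j.
Proof. by rewrite /gen; case: j => [[|[|[|[|j]]]] //= _]; lia. Qed.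

Lemma in_nM_split a d n s : in_nM a d n.+1 s ->
  exists j, gen a d j <= s /\ in_nM a d n (s - gen a d j).
Proof.
move=> [c0 [c1 [c2 [c3 [sE N]]]]].
case: c0 sE N => [|c0] sE N; last first.
  exists ord0; split; [|exists c0, c1, c2, c3; split];
    by rewrite ?sE /gen /= ?mulSn; lia.
case: c1 sE N => [|c1] sE N; last first.
  exists (@Ordinal 4 1 isT); split; [|exists 0, c1, c2, c3; split];
    by rewrite ?sE /gen /= ?mulSn; lia.
case: c2 sE N => [|c2] sE N; last first.
  exists (@Ordinal 4 2 isT); split; [|exists 0, 0, c2, c3; split];
    by rewrite ?sE /gen /= ?mulSn; lia.
case: c3 sE N => [|c3] sE N; first lia.
exists (@Ordinal 4 3 isT); split; [|exists 0, 0, 0, c3; split];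
  by rewrite ?sE /gen /= ?mulSn; lia.
Qed.

Section MonomialIdeals.
Variables (k : fieldType) (a d : nat).
Hypothesis a_gt0 : 0 < a.
Local Open Scope ring_scope.

Definition monom (g : nat) : ps k := fun m => if m == g then 1 else 0.

Lemma ps_mul_monoml g (h : ps k) s :
  ps_mul (monom g) h s = if (g <= s)%N then h (s - g)%N else 0.
Proof.
rewrite /ps_mul /monom; case: leqP => gs.
  rewrite (bigD1 (Ordinal (gs : g < s.+1)%N)) //= eqxx mul1r big1 ?addr0 // => i ig.
  by rewrite ifN ?mul0r //; apply: contra ig => /eqP ig; apply/eqP/val_inj.
by rewrite big1 // => i _; rewrite ifN ?mul0r // neq_ltn (leq_trans (ltn_ord i) gs).
Qed.

Lemma sum_neq0_term r (F : 'I_r -> k) : \sum_(i < r) F i != 0 -> exists i, F i != 0.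
Proof.
move=> F_neq0; apply/existsP; apply: contraR F_neq0; rewrite negb_exists => /forallP F0.
by rewrite big1 // => i _; apply/eqP; rewrite -[_ == _]negbK F0.
Qed.

(* m^n is supported in nM: a nonzero coefficient of x y with x in m and
   y in m^(n-1) sits at i + (s - i) with i in 1M and s - i in (n-1)M. *)
Lemma mpow_supp n (f : ps k) : mpow a d n f -> forall s, f s != 0 -> in_nM a d n s.
Proof.
elim: n f => [|n IH] f /=; first by move=> Rf s /Rf /in_nM0.
move=> [r [x [y [xy ->]]]] s /sum_neq0_term [j /sum_neq0_term [i]].
have [[Rx x0] my] := xy j; rewrite mulf_eq0 negb_or => /andP [xi yi].
rewrite -(subnKC (ltnSE (ltn_ord i))); apply: in_nM_add; last exact: IH yi.
apply: in_nM1 (Rx _ xi) _ => //.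
by apply: contraNneq xi => i0; rewrite i0 x0.
Qed.

Lemma monom_mideal j : mideal a d (monom (gen a d j)).
Proof.
split; last by rewrite /monom ifN // eq_sym -lt0n gen_gt0.
move=> s; rewrite /monom; case: (eqVneq s (gen a d j)) => [-> _|_]; last by rewrite eqxx.
exact: gen_in_sg.
Qed.

Definition pick_gen n s : 'I_4 :=
  epsilon (inhabits ord0) (fun j => gen a d j <= s /\ in_nM a d n (s - gen a d j))%N.

Lemma pick_genP n s : in_nM a d n.+1 s ->
  (gen a d (pick_gen n s) <= s)%N /\ in_nM a d n (s - gen a d (pick_gen n s)).
Proof. by move/in_nM_split; apply: epsilon_spec. Qed.

(* Conversely, a series supported in (n+1)M is sum_j t^(g_j) h_j, where h_j
   collects the coefficients at those s whose chosen generator is g_j; each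
   h_j is supported in nM, hence lies in m^n by induction. *)
Lemma supp_mpow n (f : ps k) : (forall s, f s != 0 -> in_nM a d n s) -> mpow a d n f.
Proof.
elim: n f => [|n IH] f supp_f /=; first by move=> s /supp_f /in_nM0.
pose h j : ps k := fun s =>
  let s' := (s + gen a d j)%N in if pick_gen n s' == j then f s' else 0.
exists 4%N, (fun j => monom (gen a d j)), h; split.
  move=> j; split; first exact: monom_mideal.
  apply: IH => s; rewrite /h; case: ifP => [/eqP pick_j fs | _]; last by rewrite eqxx.
  by have [_] := pick_genP (supp_f _ fs); rewrite pick_j addnK.
apply: functional_extensionality => s; under eq_bigr => j _ do rewrite ps_mul_monoml.
have [fs0|fs] := eqVneq (f s) 0.
  rewrite fs0 big1 // => j _; rewrite /h.
  by case: leqP => // gs; rewrite subnK // fs0 if_same.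
have [gs _] := pick_genP (supp_f _ fs).
rewrite (bigD1 (pick_gen n s)) //= gs /h subnK // eqxx big1 ?addr0 // => j jn.
by case: leqP => // gs'; rewrite subnK // eq_sym (negbTE jn).
Qed.

Lemma mpowE n (f : ps k) : mpow a d n f <-> (forall s, f s != 0 -> in_nM a d n s).
Proof. by split; [exact: mpow_supp | exact: supp_mpow]. Qed.

Section MonomialBasis.
Variable L : seq nat.
Hypothesis uniq_L : uniq L.

Let v (i : 'I_(size L)) : ps k := monom (nth 0%N L i).

Lemma lincomb_monom_nth c (i : 'I_(size L)) : lincomb c v (nth 0%N L i) = c i.
Proof.
rewrite /lincomb (bigD1 i) //= /v /monom eqxx mulr1 big1 ?addr0 // => j ji.
by rewrite ifN ?mulr0 // nth_uniq // eq_sym.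
Qed.

Lemma lincomb_monom_notin c m : m \notin L -> lincomb c v m = 0.
Proof.
move=> mL; rewrite /lincomb big1 // => j _; rewrite /v /monom ifN ?mulr0 //.
by apply: contraNneq mL => ->; rewrite mem_nth.
Qed.

(* If L enumerates the layer nM \ (n+1)M, the t^s for s in L form a basis
   of m^n / m^(n+1): both ideals are monomial, so membership is read off
   coefficientwise. *)
Lemma tangent_cone_dim_layer n :
  (forall s, s \in L -> in_nM a d n s /\ ~ in_nM a d n.+1 s) ->
  (forall s, in_nM a d n s -> in_nM a d n.+1 s \/ s \in L) ->
  tangent_cone_dim k a d n (size L).
Proof.
move=> L_layer nM_cover; exists v; split; [|split].
- move=> i; apply/mpowE => s; rewrite /v /monom.
  case: (eqVneq s (nth 0%N L i)) => [-> _ | _]; last by rewrite eqxx.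
  exact: (L_layer _ (mem_nth 0%N (ltn_ord i))).1.
- move=> f /mpowE supp_f; exists (fun i => f (nth 0%N L i)); apply/mpowE => s.
  have [sL|sL] := boolP (s \in L).
    have [i ->] : exists i : 'I_(size L), s = nth 0%N L i.
      by exists (Ordinal (etrans (index_mem s L) sL)); rewrite nth_index.
    by rewrite lincomb_monom_nth subrr eqxx.
  rewrite lincomb_monom_notin // subr0 => /supp_f /nM_cover [] //.
  by rewrite (negbTE sL).
- move=> c /mpowE supp_c i; apply/eqP; apply: contraT => ci.
  have := supp_c (nth 0%N L i); rewrite lincomb_monom_nth => /(_ ci).
  by move/(proj2 (L_layer _ (mem_nth 0%N (ltn_ord i)))).
Qed.

End MonomialBasis.

End MonomialIdeals.

Lemma sum_indicator x m : \sum_(0 <= j < m.+1) (x == j) = (x <= m).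
Proof.
rewrite -big_mkcond sum1_count (eq_count (a2 := pred1 x)) => [|j]; last exact: eq_sym.
by rewrite count_uniq_mem ?iota_uniq // mem_iota.
Qed.

Lemma sum_count_eq (P : nat -> nat) m s :
  \sum_(0 <= j < m.+1) count (fun i => P i == j) s = count (fun i => P i <= m) s.
Proof.
elim: s => [|x s IH] /=; first by rewrite big1.
by rewrite big_split /= IH sum_indicator.
Qed.

Lemma size_layer a d n :
  size (layer a d n) = \sum_(0 <= j < (minn n (a %/ 6 + 2)).+1) tcoef a j.
Proof.
rewrite size_map size_filter /tcoef (sum_count_eq order_i).
apply: eq_in_count => i; rewrite mem_iota => /andP [_ ia].
by rewrite leq_min (order_i_le ia) andbT.
Qed.

Theorem corollary6p9 (k : fieldType)
  (k_infinite : forall s : seq k, exists x : k, x \notin s)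
  (a d : nat) (d_gt0 : (0 < d)%N) (a_ge7 : (7 <= a)%N) (cop : coprime a d) :
  forall n : nat,
    tangent_cone_dim k a d n
      (\sum_(0 <= j < (minn n (a %/ 6 + 2)).+1) tcoef a j)%N.
Proof.
move=> n; rewrite -(size_layer a d).
apply: tangent_cone_dim_layer; [lia | exact: layer_uniq | |].
- move=> s /mem_layer [i [ia oi ->]].
  by split; [exact: layer_elt_in | exact: layer_elt_notin].
- by move=> s /(in_nM_layer cop a_ge7) [|/mem_layer]; [left | right].
Qed.
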